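(* Let $\kappa > 0$ and let $(X,d)$ be a compact CAT$(\kappa)$ space such that $d(v,w) < \pi/(2\sqrt{\kappa})$ for all $v,w \in X$. Let $N \ge 1$ and let $f = \sum_{i=1}^N f_i$, where each $f_i : X \to (-\infty,\infty]$ is proper, convex and lower semi-continuous, and suppose $f$ attains its minimum. Let $x_0 \in X$ and let $(\lambda_j)_{j\ge0}$ be a sequence of positive real numbers with $\sum_{j \ge 0}\lambda_j = \infty$ and $\sum_{j\ge 0}\lambda_j^2 < \infty$. Define $(x_n)$ by \[ x_{jN+i} = J^i_{\lambda_j}(x_{jN+i-1}), \qquad j \ge 0,\ i \in \{1,\ldots,N\}, \] where $J^i_\lambda(x) = \operatorname{argmin}_{y\in X}\left[f_i(y) + \frac{1}{\lambda}\Psi_x(y)\right]$. Suppose there exists $L > 0$ such that for every $j \in \mathbb{N}$ and $i \in \{1,\ldots,N\}$, \[ f_i(x_{jN}) - f_i(x_{jN+i}) \le L\, d(x_{jN},x_{jN+i}) \quad\text{and}\quad f_i(x_{jN+i-1}) - f_i(x_{jN+i}) \le L\, d(x_{jN+i-1},x_{jN+i}). \] Then $(x_n)$ converges to a minimum point of $f$.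
   Context: A CAT$(\kappa)$ space ($\kappa>0$) is a metric space in which any two points at distance $<\pi/\sqrt{\kappa}$ are joined by a geodesic and every geodesic triangle of perimeter $<2\pi/\sqrt{\kappa}$ satisfies the CAT$(\kappa)$ comparison inequality with respect to its comparison triangle in the sphere of constant curvature $\kappa$. Writing $(1-t)x+ty$ for the point at distance $t\,d(x,y)$ from $x$ on the geodesic from $x$ to $y$, a function $g$ is convex if $g((1-t)x+ty) \le (1-t)g(x)+tg(y)$ for all $x,y$, $t\in[0,1]$; proper means not identically $\infty$. For $x \in X$, $\Psi_x : X \to [0,\infty)$ is $\Psi_x(y) = \frac{1}{\kappa\cos(\sqrt{\kappa}\,d(y,x))} - \frac{\cos(\sqrt{\kappa}\,d(y,x))}{\kappa}$; for each proper convex lower semi-continuous $g$ and $\lambda>0$ the minimizer $\operatorname{argmin}_{y\in X}[g(y)+\frac1\lambda\Psi_x(y)]$ exists and is unique under the stated assumptions, so the $J^i_\lambda$ are well-defined maps $X\to X$. *)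

From Stdlib Require Import Reals Lra List.
From Coquelicot Require Import Coquelicot.
Open Scope R_scope.

Definition is_metric {X : Type} (d : X -> X -> R) : Prop :=
  (forall x y, 0 <= d x y) /\
  (forall x y, d x y = 0 <-> x = y) /\
  (forall x y, d x y = d y x) /\
  (forall x y z, d x z <= d x y + d y z).

Definition m_open {X : Type} (d : X -> X -> R) (U : X -> Prop) : Prop :=
  forall x, U x -> exists e, 0 < e /\ forall y, d x y < e -> U y.

Definition m_compact {X : Type} (d : X -> X -> R) : Prop :=
  forall (I : Type) (U : I -> X -> Prop),
    (forall i, m_open d (U i)) -> (forall x, exists i, U i x) ->
    exists l : list I, forall x, exists i, In i l /\ U i x.

Definition geodesic {X : Type} (d : X -> X -> R) (x y : X) (g : R -> X) : Prop :=
  g 0 = x /\ g (d x y) = y /\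
  forall s t, 0 <= s <= d x y -> 0 <= t <= d x y -> d (g s) (g t) = Rabs (s - t).

(** The model sphere M^2_kappa: unit vectors of R^3 with distance
    acos(<u,v>)/sqrt kappa. *)
Definition pt3 := (R * R * R)%type.
Definition dot3 (u v : pt3) : R :=
  let '(u1, u2, u3) := u in let '(v1, v2, v3) := v in u1 * v1 + u2 * v2 + u3 * v3.
Definition on_sphere (u : pt3) : Prop := dot3 u u = 1.
Definition dsph (kappa : R) (u v : pt3) : R := acos (dot3 u v) / sqrt kappa.

(** [P] is the comparison point in the model sphere of the point at distance s
    from the start on a side of length l with comparison endpoints A, B. *)
Definition cmp_point (kappa : R) (A B : pt3) (l s : R) (P : pt3) : Prop :=
  on_sphere P /\ dsph kappa A P = s /\ dsph kappa P B = l - s.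

(** A point of a geodesic triangle, given as a side (start a, end b, geodesic g,
    comparison endpoints A B) and a parameter s. *)
Record side {X : Type} := mkSide { s_a : X; s_b : X; s_g : R -> X; s_A : pt3; s_B : pt3 }.
Arguments side : clear implicits.

Definition CAT_space {X : Type} (kappa : R) (d : X -> X -> R) : Prop :=
  is_metric d /\
  (forall x y, d x y < PI / sqrt kappa -> exists g, geodesic d x y g) /\
  (forall (p q r : X) (gpq gqr grp : R -> X) (P Q Rr : pt3),
     geodesic d p q gpq -> geodesic d q r gqr -> geodesic d r p grp ->
     d p q + d q r + d r p < 2 * PI / sqrt kappa ->
     on_sphere P -> on_sphere Q -> on_sphere Rr ->
     dsph kappa P Q = d p q -> dsph kappa Q Rr = d q r -> dsph kappa Rr P = d r p ->
     let sides := mkSide X p q gpq P Q :: mkSide X q r gqr Q Rr :: mkSide X r p grp Rr P :: nil in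
     forall S1 S2 s1 s2 C1 C2,
       In S1 sides -> In S2 sides ->
       0 <= s1 <= d (s_a S1) (s_b S1) -> 0 <= s2 <= d (s_a S2) (s_b S2) ->
       cmp_point kappa (s_A S1) (s_B S1) (d (s_a S1) (s_b S1)) s1 C1 ->
       cmp_point kappa (s_A S2) (s_B S2) (d (s_a S2) (s_b S2)) s2 C2 ->
       d (s_g S1 s1) (s_g S2 s2) <= dsph kappa C1 C2).

(** Functions X -> (-oo, +oo], as Rbar-valued functions never equal to -oo. *)
Definition ext_valued {X : Type} (g : X -> Rbar) : Prop :=
  forall x, g x <> m_infty.

Definition proper_fun {X : Type} (g : X -> Rbar) : Prop :=
  exists x, g x <> p_infty.

Definition convex_fun {X : Type} (d : X -> X -> R) (g : X -> Rbar) : Prop :=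
  forall x y gam, geodesic d x y gam -> forall t, 0 <= t <= 1 ->
    Rbar_le (g (gam (t * d x y)))
            (Rbar_plus (Rbar_mult (1 - t) (g x)) (Rbar_mult t (g y))).

Definition lsc {X : Type} (d : X -> X -> R) (g : X -> Rbar) : Prop :=
  forall x (a : R), Rbar_lt a (g x) ->
    exists e, 0 < e /\ forall y, d x y < e -> Rbar_lt a (g y).

Definition Psi {X : Type} (kappa : R) (d : X -> X -> R) (x y : X) : R :=
  1 / (kappa * cos (sqrt kappa * d y x)) - cos (sqrt kappa * d y x) / kappa.

Definition is_resolvent {X : Type} (kappa : R) (d : X -> X -> R)
    (g : X -> Rbar) (lambda : R) (x z : X) : Prop :=
  forall y, Rbar_le (Rbar_plus (g z) (Finite (Psi kappa d x z / lambda)))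
                    (Rbar_plus (g y) (Finite (Psi kappa d x y / lambda))).

Fixpoint sumF {X : Type} (f : nat -> X -> Rbar) (N : nat) (y : X) : Rbar :=
  match N with
  | O => Finite 0
  | S n => Rbar_plus (sumF f n y) (f (S n) y)
  end.

Definition is_minimizer {X : Type} (F : X -> Rbar) (z : X) : Prop :=
  forall y, Rbar_le (F z) (F y).

Definition converges_to {X : Type} (d : X -> X -> R) (u : nat -> X) (p : X) : Prop :=
  forall e, 0 < e -> exists M, forall n, (M <= n)%nat -> d (u n) p < e.

From Stdlib Require Import Reals Lra Lia List Classical ClassicalEpsilon.
From Coquelicot Require Import Coquelicot.
Open Scope R_scope.

(* Write F = f_1 + ... + f_N. For a resolvent z = J_lambda(x) of a convex g and any y,
   comparing Psi_x along the geodesic from z to y with its model on the sphere and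
   differentiating at z gives
     kappa lambda (g z - g y) <= kappa d(y,x)^2 - kappa d(y,z)^2 + O(d(z,x)^2).
   The resolvent and Lipschitz conditions make every step O(lambda_j), so summing over the
   j-th cycle gives the quasi-Fejer inequality
     kappa lambda_j (F(x_{jN}) - F(p))
       <= kappa d(p,x_{jN})^2 - kappa d(p,x_{(j+1)N})^2 + C lambda_j^2.
   For p a minimizer, sum lambda_j = oo forces F(x_{jN}) close to min F infinitely often; by
   compactness and lower semicontinuity these cycle starts cluster at a minimizer q. For p = q,
   the distances d(q,x_{jN}) are quasi-decreasing since sum lambda_j^2 < oo and come arbitrarily
   close to 0, hence tend to 0, and inside each cycle the iterates stay within O(lambda_j) of
   x_{jN}. *)

Lemma continuity_pt_of_is_derive f x l : is_derive f x l -> continuity_pt f x.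
Proof.
  intro H. apply is_derive_Reals in H.
  apply derivable_continuous_pt. exists l. exact H.
Qed.

Lemma id_mul_cos_le_sin t : 0 <= t <= PI -> t * cos t <= sin t.
Proof.
  intros Ht.
  set (g := fun u => u * cos u - sin u).
  assert (Hd : forall u, is_derive g u (- (u * sin u))).
  { intro u. unfold g. auto_derive; auto. ring. }
  destruct (MVT_gen g 0 t (fun u => - (u * sin u))) as [c [Hc Hgc]].
  - intros; apply Hd.
  - intros; eapply continuity_pt_of_is_derive; apply Hd.
  - rewrite Rmin_left in Hc by lra. rewrite Rmax_right in Hc by lra.
    unfold g in Hgc. rewrite sin_0, cos_0 in Hgc.
    assert (0 <= sin c) by (apply sin_ge_0; lra).
    assert (0 <= c * sin c * t) by (apply Rmult_le_pos; [apply Rmult_le_pos|]; lra).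
    nra.
Qed.

Lemma sinc_antitone p q : 0 <= p -> p <= q -> q <= PI -> p * sin q <= q * sin p.
Proof.
  intros Hp Hpq Hq.
  destruct (Req_dec p 0) as [->|Hp0].
  { rewrite sin_0. lra. }
  set (g := fun u => sin u / u).
  assert (Hd : forall u, 0 < u -> is_derive g u ((u * cos u - sin u) / (u * u))).
  { intros u Hu. unfold g. auto_derive. lra. field. lra. }
  destruct (MVT_gen g p q (fun u => (u * cos u - sin u) / (u * u))) as [c [Hc Hgc]].
  - intros u Hu. apply Hd. rewrite Rmin_left in Hu by lra. lra.
  - intros u Hu. eapply continuity_pt_of_is_derive. apply Hd. rewrite Rmin_left in Hu by lra. lra.
  - rewrite Rmin_left in Hc by lra. rewrite Rmax_right in Hc by lra.
    unfold g in Hgc.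
    assert (Hslope : (c * cos c - sin c) / (c * c) <= 0).
    { pose proof (id_mul_cos_le_sin c ltac:(lra)).
      unfold Rdiv. apply Rmult_le_0_r. lra. left. apply Rinv_0_lt_compat. nra. }
    assert (Hdiff : sin q / q - sin p / p <= 0) by (rewrite Hgc; apply Rmult_le_0_r; lra).
    assert (sin q / q * (p * q) - sin p / p * (p * q) <= 0) by (assert (0 < p * q) by nra; nra).
    replace (sin q / q * (p * q)) with (p * sin q) in H by (field; lra).
    replace (sin p / p * (p * q)) with (q * sin p) in H by (field; lra).
    lra.
Qed.

Lemma mul_cos_sub_cos_le r s : 0 <= r <= PI / 2 -> 0 <= s <= PI / 2 ->
  r * (cos r - cos s) <= sin r * (s * s - r * r) / 2.
Proof.
  intros Hr Hs.
  set (g := fun u => sin r * (u * u) / 2 + r * cos u).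
  assert (Hd : forall u, is_derive g u (sin r * u - r * sin u)).
  { intro u. unfold g. auto_derive; auto. field. }
  destruct (MVT_gen g r s (fun u => sin r * u - r * sin u)) as [c [Hc Hgc]].
  - intros; apply Hd.
  - intros; eapply continuity_pt_of_is_derive; apply Hd.
  - unfold g in Hgc.
    assert (0 <= (sin r * c - r * sin c) * (s - r)).
    { destruct (Rle_dec r s).
      + rewrite Rmin_left in Hc by lra. rewrite Rmax_right in Hc by lra.
        pose proof (sinc_antitone r c ltac:(lra) ltac:(lra) ltac:(lra)).
        apply Rmult_le_pos; lra.
      + rewrite Rmin_right in Hc by lra. rewrite Rmax_left in Hc by lra.
        pose proof (sinc_antitone c r ltac:(lra) ltac:(lra) ltac:(lra)). nra. }
    lra.
Qed.

Lemma half_le_sin t : 0 <= t <= PI / 2 -> t / 2 <= sin t.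
Proof.
  intros Ht. pose proof (sinc_antitone t (PI / 2) ltac:(lra) ltac:(lra) ltac:(lra)).
  rewrite sin_PI2 in H. pose proof PI_4. assert (0 <= sin t) by (apply sin_ge_0; lra). nra.
Qed.

Lemma derive_ge_of_secant_ge (h : R -> R) (A l : R) :
  derivable_pt_lim h 0 l -> (forall t, 0 < t <= 1 -> t * A <= h t - h 0) -> A <= l.
Proof.
  intros Hl Hsec. destruct (Rle_dec A l) as [|Hn]; auto. exfalso.
  destruct (Hl ((A - l) / 2) ltac:(lra)) as [del Hdel].
  pose proof (cond_pos del) as Hdel0.
  set (t := Rmin (del / 2) 1).
  assert (Ht : 0 < t <= 1) by (split; [apply Rmin_pos|apply Rmin_r]; lra).
  assert (Htd : t <= del / 2) by apply Rmin_l.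
  specialize (Hdel t ltac:(lra) ltac:(rewrite Rabs_right; lra)).
  rewrite Rplus_0_l in Hdel. apply Rabs_def2 in Hdel.
  specialize (Hsec t Ht).
  assert (A <= (h t - h 0) / t).
  { apply Rmult_le_reg_r with t; [lra|]. unfold Rdiv. rewrite Rmult_assoc, Rinv_l; lra. }
  lra.
Qed.

Lemma div_sin_mul_cos_sub_cos_le th ro : 0 < th <= PI / 2 -> 0 <= ro <= PI / 2 ->
  th / sin th * (cos th - cos ro) <= (ro ^ 2 - th ^ 2) / 2.
Proof.
  intros Hth Hro.
  assert (Hs : 0 < sin th) by (apply sin_gt_0; pose proof PI_RGT_0; lra).
  pose proof (mul_cos_sub_cos_le th ro ltac:(lra) ltac:(lra)).
  apply Rmult_le_reg_l with (sin th); auto.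
  replace (sin th * (th / sin th * (cos th - cos ro))) with (th * (cos th - cos ro))
    by (field; lra).
  nra.
Qed.

Lemma inv_cos_sqr_sub1_le del ph : 0 < del -> del <= cos ph -> 0 <= ph <= PI / 2 ->
  1 / cos ph ^ 2 - 1 <= ph ^ 2 / del ^ 2.
Proof.
  intros Hdel HdelD Hph.
  assert (Hsp : sin ph <= ph).
  { destruct (Req_dec ph 0) as [->|]; [rewrite sin_0; lra|left; apply sin_lt_x; lra]. }
  assert (Hsp0 : 0 <= sin ph) by (apply sin_ge_0; pose proof PI_RGT_0; lra).
  replace (1 / cos ph ^ 2 - 1) with (sin ph ^ 2 / cos ph ^ 2).
  - unfold Rdiv. apply Rmult_le_compat; [nra|left; apply Rinv_0_lt_compat; nra|nra|].
    apply Rinv_le_contravar; nra.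
  - assert (sin ph ^ 2 = 1 - cos ph ^ 2) by (pose proof (sin2 ph); unfold Rsqr in *; nra).
    rewrite H. field. lra.
Qed.

Lemma resolvent_trig_bound (A del ph th ro : R) :
  0 < del -> del <= cos ph -> 0 <= ph <= PI / 2 -> 0 < th <= PI / 2 -> 0 <= ro <= PI / 2 ->
  A <= (1 + 1 / cos ph ^ 2) * (th / sin th) * (cos ph * cos th - cos ro) ->
  A <= ro ^ 2 - th ^ 2 + 2 * ph ^ 2 / del ^ 2.
Proof.
  intros Hdel HdelD Hph Hth Hro HA.
  pose proof (div_sin_mul_cos_sub_cos_le th ro Hth Hro) as HPhi.
  pose proof (inv_cos_sqr_sub1_le del ph Hdel HdelD Hph) as Herr.
  set (D := cos ph) in *.
  assert (HD1 : D <= 1) by apply COS_bound.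
  assert (Hs : 0 < sin th) by (apply sin_gt_0; pose proof PI_RGT_0; lra).
  assert (Hct : 0 <= cos th) by (apply cos_ge_0; lra).
  set (w := th / sin th) in *.
  assert (Hw : 0 < w) by (unfold w; apply Rdiv_lt_0_compat; lra).
  set (Phi := w * (cos th - cos ro)) in *.
  assert (HPhi2 : Phi <= 2) by (pose proof PI_4; nra).
  set (iD := 1 / D ^ 2) in *.
  assert (HiD : 1 <= iD).
  { assert (HD2 : 0 < D ^ 2 <= 1) by nra.
    assert (iD * D ^ 2 = 1) by (unfold iD; field; lra). nra. }
  assert (Hq : D * cos th - cos ro <= cos th - cos ro) by nra.
  destruct (Rle_dec (D * cos th - cos ro) 0).
  - assert ((1 + iD) * w * (D * cos th - cos ro) <= 2 * w * (D * cos th - cos ro)).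
    { assert (0 <= (iD - 1) * w * (- (D * cos th - cos ro)))
        by (apply Rmult_le_pos; [apply Rmult_le_pos|]; lra).
      nra. }
    assert (2 * w * (D * cos th - cos ro) <= 2 * Phi) by (unfold Phi; nra).
    assert (0 <= 2 * ph ^ 2 / del ^ 2)
      by (unfold Rdiv; apply Rmult_le_pos; [nra|left; apply Rinv_0_lt_compat; nra]).
    lra.
  - assert ((1 + iD) * w * (D * cos th - cos ro) <= (1 + iD) * Phi)
      by (unfold Phi; assert (0 <= (1 + iD) * w) by nra; nra).
    assert (0 <= Phi) by (unfold Phi; nra).
    assert ((iD - 1) * Phi <= ph ^ 2 / del ^ 2 * 2) by (apply Rmult_le_compat; lra).
    lra.
Qed.

Lemma dot3_comm A B : dot3 A B = dot3 B A.
Proof. destruct A as [[a1 a2] a3], B as [[b1 b2] b3]; simpl; ring. Qed.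

Lemma dot3_equator a b : dot3 (cos a, sin a, 0) (cos b, sin b, 0) = cos (b - a).
Proof. simpl. rewrite cos_minus. ring. Qed.

Lemma on_sphere_equator a : on_sphere (cos a, sin a, 0).
Proof. unfold on_sphere; simpl. pose proof (sin2_cos2 a). unfold Rsqr in *. lra. Qed.

Lemma dot3_sphere_bound A B : on_sphere A -> on_sphere B -> -1 <= dot3 A B <= 1.
Proof.
  destruct A as [[a1 a2] a3], B as [[b1 b2] b3]; unfold on_sphere; simpl; intros HA HB.
  pose proof (pow2_ge_0 (a1 - b1)); pose proof (pow2_ge_0 (a2 - b2));
  pose proof (pow2_ge_0 (a3 - b3)).
  pose proof (pow2_ge_0 (a1 + b1)); pose proof (pow2_ge_0 (a2 + b2));
  pose proof (pow2_ge_0 (a3 + b3)).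
  split; nra.
Qed.

Lemma dsph_of_dot kappa A B r : 0 < kappa -> 0 <= sqrt kappa * r <= PI ->
  dot3 A B = cos (sqrt kappa * r) -> dsph kappa A B = r.
Proof.
  intros Hk Hr E. pose proof (sqrt_lt_R0 _ Hk).
  unfold dsph. rewrite E, acos_cos by lra. field. lra.
Qed.

Lemma dot3_le_cos_of_le_dsph kappa A B r : 0 < kappa -> on_sphere A -> on_sphere B ->
  0 <= sqrt kappa * r <= PI -> r <= dsph kappa A B -> dot3 A B <= cos (sqrt kappa * r).
Proof.
  intros Hk HA HB Hr Hle.
  pose proof (sqrt_lt_R0 _ Hk) as Ha.
  pose proof (dot3_sphere_bound A B HA HB) as Hdot.
  pose proof (acos_bound (dot3 A B)).
  assert (sqrt kappa * r <= acos (dot3 A B)).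
  { unfold dsph in Hle. apply Rmult_le_compat_l with (r := sqrt kappa) in Hle; [|lra].
    replace (sqrt kappa * (acos (dot3 A B) / sqrt kappa)) with (acos (dot3 A B)) in Hle
      by (field; lra).
    exact Hle. }
  rewrite <- (cos_acos (dot3 A B)) at 1 by lra.
  apply cos_decr_1; lra.
Qed.

Lemma equator_cmp_point kappa l s : 0 < kappa -> 0 <= s <= l -> sqrt kappa * l <= PI ->
  cmp_point kappa (cos 0, sin 0, 0) (cos (sqrt kappa * l), sin (sqrt kappa * l), 0) l s
    (cos (sqrt kappa * s), sin (sqrt kappa * s), 0).
Proof.
  intros Hk Hs Hl. pose proof (sqrt_lt_R0 _ Hk).
  split; [apply on_sphere_equator|split]; apply dsph_of_dot; try lra;
    try (split; nra); rewrite dot3_equator; f_equal; ring.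
Qed.

(* Third vertex of the spherical triangle with sides [al], [be], [ga] whose other vertices are
   [(1,0,0)] and [(cos al, sin al, 0)], described through its dot products with the equator. *)
Lemma spherical_vertex al be ga :
  0 < al < PI -> 0 <= ga -> al + ga <= PI ->
  be <= al + ga -> al <= be + ga -> ga <= al + be ->
  exists Rr, on_sphere Rr /\
    forall s, sin al * dot3 (cos s, sin s, 0) Rr = sin (al - s) * cos ga + sin s * cos be.
Proof.
  intros Hal Hga Hsum T1 T2 T3.
  assert (Hsa : 0 < sin al) by (apply sin_gt_0; lra).
  assert (Hsg : 0 <= sin ga) by (apply sin_ge_0; lra).
  set (c := cos ga).
  set (u := (cos be - cos al * c) / sin al).
  assert (Hb1 : cos be - cos al * c <= sin al * sin ga).
  { assert (cos be <= cos (al - ga)).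
    { destruct (Rle_dec ga al).
      - apply cos_decr_1; lra.
      - replace (al - ga) with (- (ga - al)) by ring. rewrite cos_neg. apply cos_decr_1; lra. }
    rewrite cos_minus in H. unfold c. lra. }
  assert (Hb2 : - (sin al * sin ga) <= cos be - cos al * c).
  { assert (cos (al + ga) <= cos be) by (apply cos_decr_1; lra).
    rewrite cos_plus in H. unfold c. lra. }
  assert (Hu2 : u ^ 2 <= 1 - c ^ 2).
  { assert (E : 1 - c ^ 2 = sin ga ^ 2) by (unfold c; pose proof (sin2 ga); unfold Rsqr in *; nra).
    rewrite E. unfold u.
    assert ((cos be - cos al * c) ^ 2 <= (sin al * sin ga) ^ 2) by nra.
    unfold Rdiv. rewrite Rpow_mult_distr, pow_inv.
    apply Rmult_le_reg_r with (sin al ^ 2); [nra|].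
    rewrite Rmult_assoc, Rinv_l by nra. nra. }
  exists (c, u, sqrt (1 - c ^ 2 - u ^ 2)). split.
  - unfold on_sphere; simpl.
    pose proof (sqrt_sqrt (1 - c ^ 2 - u ^ 2) ltac:(lra)). simpl in *. lra.
  - intro s. simpl. rewrite sin_minus. unfold u. field. lra.
Qed.

Lemma list_pos_lower_bound {I : Type} (l : list I) (r : I -> R) :
  (forall i, In i l -> 0 < r i) -> exists m, 0 < m /\ forall i, In i l -> m <= r i.
Proof.
  induction l as [|a l IH]; intros H.
  - exists 1. split; [lra|]. intros i [].
  - destruct IH as [m [Hm Hm']]; [intros i Hi; apply H; right; auto|].
    exists (Rmin m (r a)). split; [apply Rmin_pos; auto; apply H; left; auto|].
    intros i [<-|Hi]; [apply Rmin_r|]. eapply Rle_trans; [apply Rmin_l|auto].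
Qed.

Lemma list_nat_upper_bound {I : Type} (l : list I) (r : I -> nat) :
  exists m, forall i, In i l -> (r i <= m)%nat.
Proof.
  induction l as [|a l [m Hm]].
  - exists 0%nat. intros i [].
  - exists (Nat.max m (r a)). intros i [<-|Hi]; [lia|]. specialize (Hm i Hi). lia.
Qed.

Lemma m_open_ball {X} (d : X -> X -> R) : is_metric d -> forall c r, m_open d (fun y => d c y < r).
Proof.
  intros [_ [_ [_ Htri]]] c r y Hy. exists (r - d c y). split; [lra|].
  intros y' Hy'. pose proof (Htri c y y'). lra.
Qed.

Lemma compact_diam_gap {X} (d : X -> X -> R) (rho : R) : is_metric d -> m_compact d ->
  (forall v w, d v w < rho) -> exists eta, 0 < eta /\ forall v w, d v w <= rho - eta.
Proof.
  intros Hm Hc Hb. pose proof Hm as [_ [Hdeq [Hsym Htri]]].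
  assert (Hself : forall v, d v v = 0) by (intro; apply Hdeq; reflexivity).
  assert (Hpoint : forall v, exists eta, 0 < eta /\ forall w, d v w <= rho - eta).
  { intro v.
    destruct (Hc X (fun w y => d w y < (rho - d v w) / 2)) as [l Hl].
    - intro w. apply m_open_ball; auto.
    - intro y. exists y. rewrite Hself. specialize (Hb v y). lra.
    - destruct (list_pos_lower_bound l (fun w => (rho - d v w) / 2)) as [m [Hm0 Hm1]].
      { intros i _. specialize (Hb v i). lra. }
      exists m. split; auto. intro w. destruct (Hl w) as [i [Hi Hiw]].
      specialize (Hm1 i Hi). pose proof (Htri v i w). simpl in Hm1. lra. }
  set (I := {p : X * R | 0 < snd p /\ forall w, d (fst p) w <= rho - snd p}).
  destruct (Hc I (fun p y => d (fst (proj1_sig p)) y < snd (proj1_sig p) / 2)) as [l Hl].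
  - intro p. apply m_open_ball; auto.
  - intro y. destruct (Hpoint y) as [eta [He He']].
    exists (exist _ (y, eta) (conj He He')). simpl. rewrite Hself. lra.
  - destruct (list_pos_lower_bound l (fun p => snd (proj1_sig p) / 2)) as [m [Hm0 Hm1]].
    { intros [[c e] [He He']] _. simpl in *. lra. }
    exists m. split; auto. intros v w. destruct (Hl v) as [[[c e] [He He']] [Hi Hiv]].
    specialize (Hm1 _ Hi). pose proof (He' w). simpl in Hm1, Hiv, H.
    pose proof (Htri v c w). rewrite (Hsym v c) in H0. lra.
Qed.

(* Otherwise every point has a ball that the sequence eventually leaves for good; a finite
   subcover then contradicts the sequence staying in the space. *)
Lemma compact_cluster_point {X} (d : X -> X -> R) : is_metric d -> m_compact d ->
  forall u : nat -> X,
  exists q, forall e, 0 < e -> forall M, exists n, (M <= n)%nat /\ d (u n) q < e.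
Proof.
  intros Hm Hc u. pose proof Hm as [_ [Hdeq [Hsym _]]].
  apply NNPP. intro Hn.
  assert (Hq : forall q, exists e, 0 < e /\ exists M, forall n, (M <= n)%nat -> e <= d (u n) q).
  { intro q. apply NNPP. intro Hq. apply Hn. exists q. intros e He M.
    apply NNPP. intro H2. apply Hq. exists e. split; auto. exists M. intros n Hn'.
    apply Rnot_lt_le. intro H3. apply H2. exists n. auto. }
  set (I := {p : X * R * nat |
    0 < snd (fst p) /\ forall n, (snd p <= n)%nat -> snd (fst p) <= d (u n) (fst (fst p))}).
  destruct (Hc I (fun p y => d (fst (fst (proj1_sig p))) y < snd (fst (proj1_sig p)))) as [l Hl].
  - intro p. apply m_open_ball; auto.
  - intro y. destruct (Hq y) as [e [He [M HM]]].
    exists (exist _ (y, e, M) (conj He HM)). simpl.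
    rewrite (proj2 (Hdeq y y) eq_refl). lra.
  - destruct (list_nat_upper_bound l (fun p => snd (proj1_sig p))) as [M0 HM0].
    destruct (Hl (u M0)) as [[[[c e] M] [He HM]] [Hi Hin]].
    specialize (HM0 _ Hi). simpl in HM0, Hin. pose proof (HM M0 HM0). simpl in H.
    rewrite Hsym in Hin. lra.
Qed.

Lemma Rbar_finite_real (v : Rbar) : v <> p_infty -> v <> m_infty -> v = Finite (real v).
Proof. destruct v; simpl; congruence. Qed.

Lemma Rbar_lt_dense (a : R) (b : Rbar) : Rbar_lt a b -> exists M : R, a < M /\ Rbar_lt M b.
Proof.
  destruct b as [b| |]; simpl; intros H; try contradiction.
  - exists ((a + b) / 2). simpl. split; lra.
  - exists (a + 1). simpl. split; auto. lra.
Qed.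

Lemma Rbar_lt_plus_split (M : R) (A B : Rbar) : A <> m_infty -> B <> m_infty ->
  Rbar_lt M (Rbar_plus A B) -> exists M1 M2, M1 + M2 = M /\ Rbar_lt M1 A /\ Rbar_lt M2 B.
Proof.
  intros HA HB H. destruct A as [a| |]; destruct B as [b| |]; try congruence; simpl in H.
  - exists (a - (a + b - M) / 2), (b - (a + b - M) / 2). simpl. repeat split; lra.
  - exists (a - 1), (M - (a - 1)). simpl. repeat split; lra.
  - exists (M - (b - 1)), (b - 1). simpl. repeat split; lra.
  - exists M, 0. simpl. repeat split; lra.
Qed.

Lemma Rbar_plus_lt_compat (M1 M2 : R) (A B : Rbar) : A <> m_infty -> B <> m_infty ->
  Rbar_lt M1 A -> Rbar_lt M2 B -> Rbar_lt (M1 + M2) (Rbar_plus A B).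
Proof.
  intros HA HB H1 H2.
  destruct A as [a| |]; destruct B as [b| |]; try congruence; simpl in *; auto. lra.
Qed.

Fixpoint sumF_real {X} (f : nat -> X -> Rbar) (n : nat) (y : X) : R :=
  match n with O => 0 | S n => sumF_real f n y + real (f (S n) y) end.

Lemma sumF_finite {X} (f : nat -> X -> Rbar) n y :
  (forall i, (1 <= i <= n)%nat -> f i y = Finite (real (f i y))) ->
  sumF f n y = Finite (sumF_real f n y).
Proof.
  induction n; intros H; simpl; [reflexivity|].
  rewrite IHn by (intros; apply H; lia). rewrite (H (S n)) by lia. reflexivity.
Qed.

Lemma sumF_not_m_infty {X} (f : nat -> X -> Rbar) n y :
  (forall i, (1 <= i <= n)%nat -> f i y <> m_infty) -> sumF f n y <> m_infty.
Proof.
  induction n; intros H; simpl; [discriminate|].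
  assert (H1 := IHn ltac:(intros; apply H; lia)).
  assert (H2 := H (S n) ltac:(lia)).
  destruct (sumF f n y); destruct (f (S n) y); simpl; congruence.
Qed.

Lemma sumF_finite_terms {X} (f : nat -> X -> Rbar) n y :
  (forall i, (1 <= i <= n)%nat -> f i y <> m_infty) -> sumF f n y <> p_infty ->
  forall i, (1 <= i <= n)%nat -> f i y <> p_infty.
Proof.
  induction n; intros H Hs i Hi; [lia|].
  assert (H1 := sumF_not_m_infty f n y ltac:(intros; apply H; lia)).
  assert (H2 := H (S n) ltac:(lia)).
  simpl in Hs.
  assert (sumF f n y <> p_infty /\ f (S n) y <> p_infty)
    by (destruct (sumF f n y); destruct (f (S n) y); simpl in *; split; congruence).
  destruct (Nat.eq_dec i (S n)) as [->|]; [tauto|].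
  apply IHn; [intros; apply H; lia|tauto|lia].
Qed.

Lemma sumF_lsc {X} (d : X -> X -> R) (f : nat -> X -> Rbar) n :
  (forall i, (1 <= i <= n)%nat -> ext_valued (f i) /\ lsc d (f i)) -> lsc d (sumF f n).
Proof.
  induction n; intros H y0 M HM.
  - exists 1. split; [lra|]. intros. simpl in *. auto.
  - simpl in HM.
    assert (Hn : forall y, sumF f n y <> m_infty)
      by (intro y; apply sumF_not_m_infty; intros i Hi; apply (H i ltac:(lia))).
    destruct (H (S n) ltac:(lia)) as [Hev Hlsc].
    destruct (Rbar_lt_plus_split M _ _ (Hn y0) (Hev y0) HM) as [M1 [M2 [HMe [H1 H2]]]].
    destruct (IHn ltac:(intros; apply H; lia) y0 M1 H1) as [e1 [He1 He1']].
    destruct (Hlsc y0 M2 H2) as [e2 [He2 He2']].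
    exists (Rmin e1 e2). split; [apply Rmin_pos; auto|].
    intros y Hy. simpl. rewrite <- HMe.
    pose proof (Rmin_l e1 e2). pose proof (Rmin_r e1 e2).
    apply Rbar_plus_lt_compat; auto; [apply He1'|apply He2']; lra.
Qed.

Lemma resolvent_finite {X} kappa (d : X -> X -> R) (g : X -> Rbar) lam x z :
  proper_fun g -> is_resolvent kappa d g lam x z -> g z <> p_infty.
Proof.
  intros [y Hy] Hres Hz. specialize (Hres y). rewrite Hz in Hres. simpl in Hres.
  destruct (g y); simpl in Hres; congruence.
Qed.

Fixpoint psum (a : nat -> R) (n : nat) : R := match n with O => 0 | S n => psum a n + a n end.

Lemma sum_n_psum a n : sum_n a n = psum a (S n).
Proof.
  induction n; [rewrite sum_O; simpl; lra|].
  rewrite sum_Sn, IHn. reflexivity.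
Qed.

Lemma psum_le_add a : (forall n, 0 <= a n) -> forall m k, psum a m <= psum a (m + k).
Proof.
  intros H m k. induction k; [rewrite Nat.add_0_r; lra|].
  rewrite Nat.add_succ_r. simpl. specialize (H (m + k)%nat). lra.
Qed.

Lemma psum_nonneg a : (forall n, 0 <= a n) -> forall n, 0 <= psum a n.
Proof. intros H n. exact (psum_le_add a H 0 n). Qed.

Lemma psum_tail_lt a : ex_series a ->
  forall e, 0 < e -> exists J, forall m k, (J <= m)%nat -> psum a (m + k) - psum a m < e.
Proof.
  intros [l Hl] e He.
  assert (Hlim : is_lim_seq (sum_n a) l) by exact Hl.
  apply is_lim_seq_spec in Hlim.
  destruct (Hlim (mkposreal (e / 2) ltac:(lra))) as [J HJ]. simpl in HJ.
  exists (S J). intros m k Hm.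
  destruct m as [|m]; [lia|].
  pose proof (HJ m ltac:(lia)). pose proof (HJ (m + k)%nat ltac:(lia)).
  rewrite sum_n_psum in H, H0. replace (S m + k)%nat with (S (m + k)) by lia.
  apply Rabs_def2 in H. apply Rabs_def2 in H0. lra.
Qed.

Lemma psum_bounded a : ex_series a -> (forall n, 0 <= a n) -> exists B, forall n, psum a n <= B.
Proof.
  intros Hs Ha. destruct (psum_tail_lt a Hs 1 ltac:(lra)) as [J HJ].
  exists (psum a J + 1). intro n. destruct (Compare_dec.le_lt_dec J n).
  - specialize (HJ J (n - J)%nat (le_n _)). replace (J + (n - J))%nat with n in HJ by lia. lra.
  - pose proof (psum_le_add a Ha n (J - n)). replace (n + (J - n))%nat with J in H by lia. lra.
Qed.

Lemma psum_tail_unbounded a : is_lim_seq (sum_n a) p_infty ->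
  forall M m, exists k, M < psum a (m + k) - psum a m.
Proof.
  intros H M m. apply is_lim_seq_spec in H. destruct (H (M + psum a m)) as [J HJ].
  exists (S J). specialize (HJ (m + J)%nat ltac:(lia)).
  rewrite sum_n_psum in HJ. replace (m + S J)%nat with (S (m + J)) by lia. lra.
Qed.

Lemma sqr_summable_eventually_lt lam : ex_series (fun j => lam j ^ 2) -> (forall j, 0 <= lam j) ->
  forall e, 0 < e -> exists J, forall j, (J <= j)%nat -> lam j < e.
Proof.
  intros Hs Hl e He.
  destruct (psum_tail_lt _ Hs (e ^ 2) ltac:(nra)) as [J HJ].
  exists J. intros j Hj. specialize (HJ j 1%nat Hj). rewrite Nat.add_1_r in HJ. simpl in HJ.
  specialize (Hl j). nra.
Qed.

Lemma psum_scal r a n : psum (fun j => r * a j) n = r * psum a n.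
Proof. induction n; simpl; [ring|rewrite IHn; ring]. Qed.

Lemma psum_telescope (a c s : nat -> R) (C : R) M :
  (forall j, (M <= j)%nat -> a j <= s j - s (S j) + C * c j) ->
  forall k, psum a (M + k)%nat - psum a M
    <= s M - s (M + k)%nat + C * (psum c (M + k)%nat - psum c M).
Proof.
  intros H k. induction k; [rewrite Nat.add_0_r; lra|].
  rewrite Nat.add_succ_r. simpl. specialize (H (M + k)%nat ltac:(lia)). lra.
Qed.

Lemma quasi_fejer_frequently_small (c0 C B : R) (lam s e : nat -> R) :
  0 < c0 -> 0 <= C -> (forall j, 0 <= s j <= B) -> (forall j, 0 < lam j) ->
  (forall j, c0 * lam j * e j <= s j - s (S j) + C * lam j ^ 2) ->
  is_lim_seq (sum_n lam) p_infty -> ex_series (fun j => lam j ^ 2) ->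
  forall eps, 0 < eps -> forall M, exists j, (M <= j)%nat /\ e j < eps.
Proof.
  intros Hc0 HC Hs Hl Hrec Hdiv Hsq eps Heps M.
  apply NNPP. intro Hn.
  assert (Hstep : forall j, (M <= j)%nat ->
    c0 * eps * lam j <= s j - s (S j) + C * lam j ^ 2).
  { intros j Hj. specialize (Hrec j). specialize (Hl j).
    assert (eps <= e j) by (apply Rnot_lt_le; intro; apply Hn; exists j; auto).
    assert (c0 * eps * lam j <= c0 * lam j * e j) by (assert (0 <= c0 * lam j) by nra; nra).
    lra. }
  destruct (psum_bounded _ Hsq ltac:(intros; apply pow2_ge_0)) as [B2 HB2].
  destruct (psum_tail_unbounded lam Hdiv ((B + C * B2) / (c0 * eps) + 1) M) as [k Hk].
  pose proof (psum_telescope _ _ s C M Hstep k) as Htel. rewrite !psum_scal in Htel.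
  pose proof (psum_nonneg (fun j => lam j ^ 2) ltac:(intros; apply pow2_ge_0) M).
  pose proof (HB2 (M + k)%nat). pose proof (Hs M). pose proof (Hs (M + k)%nat).
  assert (c0 * eps * (psum lam (M + k) - psum lam M) <= B + C * B2) by nra.
  assert (0 < c0 * eps) by nra.
  assert (HH : c0 * eps * ((B + C * B2) / (c0 * eps) + 1)
              < c0 * eps * (psum lam (M + k) - psum lam M))
    by (apply Rmult_lt_compat_l; auto).
  replace (c0 * eps * ((B + C * B2) / (c0 * eps) + 1)) with (B + C * B2 + c0 * eps) in HH
    by (field; lra).
  lra.
Qed.

Lemma quasi_fejer_eventually_small (C : R) (lam s : nat -> R) :
  0 <= C -> (forall j, s (S j) <= s j + C * lam j ^ 2) -> ex_series (fun j => lam j ^ 2) ->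
  (forall eps, 0 < eps -> forall M, exists j, (M <= j)%nat /\ s j < eps) ->
  forall eps, 0 < eps -> exists J, forall j, (J <= j)%nat -> s j < eps.
Proof.
  intros HC Hrec Hsq Hfreq eps Heps.
  destruct (psum_tail_lt _ Hsq (eps / (2 * (C + 1))) ltac:(apply Rdiv_lt_0_compat; lra))
    as [J HJ].
  destruct (Hfreq (eps / 2) ltac:(lra) J) as [j0 [Hj0 Hs0]].
  exists j0. intros j Hj.
  assert (Hnn : forall n, 0 <= lam n ^ 2) by (intro; apply pow2_ge_0).
  pose proof (psum_telescope (fun _ => 0) (fun j => lam j ^ 2) s C j0
    ltac:(intros n _; specialize (Hrec n); lra) (j - j0)) as Htel.
  assert (H0s : forall n, psum (fun _ => 0) n = 0) by (induction n; simpl; lra).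
  rewrite !H0s in Htel.
  pose proof (psum_le_add _ Hnn j0 (j - j0)).
  specialize (HJ j0 (j - j0)%nat Hj0).
  replace (j0 + (j - j0))%nat with j in * by lia.
  assert (C * (psum (fun n => lam n ^ 2) j - psum (fun n => lam n ^ 2) j0)
            <= (C + 1) * (eps / (2 * (C + 1)))) by (apply Rmult_le_compat; lra).
  replace ((C + 1) * (eps / (2 * (C + 1)))) with (eps / 2) in H0 by (field; lra).
  lra.
Qed.

(* On the unit sphere, the cosine of the distance from a fixed point to the point at parameter
   [t] of a great-circle arc of length [th] is [sin_interp th D E t], where [D] and [E] are its
   values at the endpoints; CAT(kappa) turns this into a lower bound. *)
Definition sin_interp (th D E t : R) : R :=
  (sin ((1 - t) * th) * D + sin (t * th) * E) / sin th.

(* [Psi kappa d x y = psi_profile kappa (cos (sqrt kappa * d y x))]. *)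
Definition psi_profile (kappa c : R) : R := 1 / (kappa * c) - c / kappa.

Lemma sin_interp0 th D E : 0 < sin th -> sin_interp th D E 0 = D.
Proof.
  intro Hs. unfold sin_interp.
  replace ((1 - 0) * th) with th by ring. replace (0 * th) with 0 by ring.
  rewrite sin_0. field. lra.
Qed.

Lemma sin_le_split th t : 0 <= th <= PI / 2 -> 0 <= t <= 1 ->
  sin th <= sin ((1 - t) * th) + sin (t * th).
Proof.
  intros Hth Ht.
  replace th with ((1 - t) * th + t * th) at 1 by ring. rewrite sin_plus.
  assert (0 <= sin ((1 - t) * th)) by (apply sin_ge_0; nra).
  assert (0 <= sin (t * th)) by (apply sin_ge_0; nra).
  assert (0 <= cos (t * th) <= 1) by (split; [apply cos_ge_0; nra|apply COS_bound]).
  assert (0 <= cos ((1 - t) * th) <= 1) by (split; [apply cos_ge_0; nra|apply COS_bound]).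
  nra.
Qed.

Lemma min_le_sin_interp th D E t : 0 < th <= PI / 2 -> 0 <= D -> 0 <= E -> 0 <= t <= 1 ->
  Rmin D E <= sin_interp th D E t.
Proof.
  intros Hth HD HE Ht. unfold sin_interp.
  assert (Hs : 0 < sin th) by (apply sin_gt_0; pose proof PI_RGT_0; lra).
  assert (S1 : 0 <= sin ((1 - t) * th)) by (apply sin_ge_0; nra).
  assert (S2 : 0 <= sin (t * th)) by (apply sin_ge_0; nra).
  pose proof (sin_le_split th t ltac:(lra) Ht).
  apply Rmult_le_reg_r with (sin th); auto.
  unfold Rdiv. rewrite Rmult_assoc, Rinv_l by lra.
  pose proof (Rmin_l D E). pose proof (Rmin_r D E).
  assert (0 <= Rmin D E) by (apply Rmin_glb; lra).
  nra.
Qed.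

Lemma psi_profile_antitone k b c : 0 < k -> 0 < b -> b <= c -> psi_profile k c <= psi_profile k b.
Proof.
  intros Hk Hb Hbc. unfold psi_profile.
  assert (1 / (k * c) <= 1 / (k * b)).
  { unfold Rdiv. rewrite !Rmult_1_l. apply Rinv_le_contravar; nra. }
  assert (b / k <= c / k) by (apply Rmult_le_compat_r; [left; apply Rinv_0_lt_compat|]; lra).
  lra.
Qed.

Lemma psi_profile_sin_interp_derive k th D E : 0 < k -> 0 < D -> 0 < sin th ->
  is_derive (fun t => psi_profile k (sin_interp th D E t)) 0
    ((1 + 1 / D ^ 2) * (th / sin th) * (D * cos th - E) / k).
Proof.
  intros. unfold psi_profile, sin_interp. auto_derive.
  - replace ((1 + - 0) * th) with th by ring. replace (0 * th) with 0 by ring. rewrite sin_0.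
    replace ((sin th * D + 0 * E) * / sin th) with D by (field; lra). nra.
  - replace ((1 + - 0) * th) with th by ring. replace (0 * th) with 0 by ring.
    rewrite sin_0, cos_0. field. split; lra.
Qed.

Section CATSpace.

Variables (X : Type) (d : X -> X -> R) (kappa : R).
Hypothesis Hk : 0 < kappa.
Hypothesis Hcat : CAT_space kappa d.
Hypothesis Hcomp : m_compact d.
Hypothesis Hdiam : forall v w, d v w < PI / (2 * sqrt kappa).

Lemma metric_nonneg v w : 0 <= d v w.
Proof. now destruct Hcat as [[H _] _]. Qed.

Lemma metric_eq0 v w : d v w = 0 <-> v = w.
Proof. now destruct Hcat as [[_ [H _]] _]. Qed.

Lemma metric_sym v w : d v w = d w v.
Proof. now destruct Hcat as [[_ [_ [H _]]] _]. Qed.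

Lemma metric_triangle u v w : d u w <= d u v + d v w.
Proof. now destruct Hcat as [[_ [_ [_ H]]] _]. Qed.

Lemma metric_self v : d v v = 0.
Proof. now apply metric_eq0. Qed.

Lemma sqrt_kappa_pos : 0 < sqrt kappa.
Proof. now apply sqrt_lt_R0. Qed.

Lemma scaled_dist_bounds v w : 0 <= sqrt kappa * d v w < PI / 2.
Proof.
  pose proof sqrt_kappa_pos. pose proof (Hdiam v w). pose proof (metric_nonneg v w).
  split; [nra|].
  apply Rmult_lt_compat_l with (r := sqrt kappa) in H0; auto.
  replace (sqrt kappa * (PI / (2 * sqrt kappa))) with (PI / 2) in H0 by (field; lra).
  exact H0.
Qed.

Lemma geodesic_exists v w : exists g, geodesic d v w g.
Proof.
  destruct Hcat as [_ [Hgeo _]]. apply Hgeo.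
  pose proof sqrt_kappa_pos. pose proof (scaled_dist_bounds v w). pose proof PI_RGT_0.
  apply Rmult_lt_reg_l with (sqrt kappa); auto.
  replace (sqrt kappa * (PI / sqrt kappa)) with PI by (field; lra). lra.
Qed.

Lemma scaled_triangle u v w : sqrt kappa * d u w <= sqrt kappa * d u v + sqrt kappa * d v w.
Proof. pose proof sqrt_kappa_pos. pose proof (metric_triangle u v w). nra. Qed.

Lemma cat_equator_comparison x z y g Rr : geodesic d z y g -> on_sphere Rr ->
  dsph kappa (cos (sqrt kappa * d z y), sin (sqrt kappa * d z y), 0) Rr = d y x ->
  dsph kappa Rr (cos 0, sin 0, 0) = d x z ->
  forall t, 0 <= t <= 1 ->
  d (g (t * d z y)) x <=
    dsph kappa (cos (sqrt kappa * (t * d z y)), sin (sqrt kappa * (t * d z y)), 0) Rr.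
Proof.
  intros Hg HR HQR HRP t Ht.
  destruct Hcat as [_ [_ Hcmp]].
  destruct (geodesic_exists y x) as [gyx Hgyx]. destruct (geodesic_exists x z) as [gxz Hgxz].
  pose proof sqrt_kappa_pos. pose proof PI_RGT_0. pose proof (metric_nonneg z y).
  pose proof (scaled_dist_bounds z y). pose proof (scaled_dist_bounds y x).
  pose proof (scaled_dist_bounds x z).
  assert (Hper : d z y + d y x + d x z < 2 * PI / sqrt kappa).
  { apply Rmult_lt_reg_l with (sqrt kappa); auto.
    replace (sqrt kappa * (2 * PI / sqrt kappa)) with (2 * PI) by (field; lra). nra. }
  destruct (equator_cmp_point kappa (d z y) (d z y) Hk ltac:(lra) ltac:(lra)) as [_ [HPQ _]].
  assert (HC2 : cmp_point kappa Rr (cos 0, sin 0, 0) (d x z) 0 Rr).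
  { split; [exact HR|split].
    - apply dsph_of_dot; [lra|nra|]. rewrite Rmult_0_r, cos_0. exact HR.
    - rewrite HRP. ring. }
  pose proof (Hcmp z y x g gyx gxz _ _ Rr Hg Hgyx Hgxz Hper
     (on_sphere_equator 0) (on_sphere_equator _) HR HPQ HQR HRP
     (mkSide X z y g _ _) (mkSide X x z gxz Rr _) (t * d z y) 0 _ Rr
     ltac:(simpl; auto) ltac:(simpl; auto) ltac:(simpl; nra)
     ltac:(simpl; split; [lra|apply metric_nonneg])
     (equator_cmp_point kappa (d z y) (t * d z y) Hk ltac:(nra) ltac:(lra)) HC2) as Hle.
  destruct Hgxz as [Hx _]. simpl in Hle. rewrite Hx in Hle. exact Hle.
Qed.

Lemma cat_cos_comparison x z y g : geodesic d z y g -> 0 < d z y -> forall t, 0 <= t <= 1 ->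
  sin_interp (sqrt kappa * d z y) (cos (sqrt kappa * d z x)) (cos (sqrt kappa * d y x)) t
  <= cos (sqrt kappa * d (g (t * d z y)) x).
Proof.
  intros Hg Hzy t Ht.
  pose proof sqrt_kappa_pos as Ha.
  pose proof (scaled_dist_bounds z y). pose proof (scaled_dist_bounds y x).
  pose proof (scaled_dist_bounds x z). pose proof (scaled_dist_bounds (g (t * d z y)) x).
  pose proof (scaled_triangle y z x) as T1. pose proof (scaled_triangle z x y) as T2.
  pose proof (scaled_triangle x y z) as T3.
  rewrite (metric_sym y z), (metric_sym z x) in T1.
  rewrite (metric_sym z x), (metric_sym x y) in T2.
  rewrite (metric_sym x y), (metric_sym y z) in T3.
  rewrite (metric_sym z x).
  set (al := sqrt kappa * d z y) in *. set (be := sqrt kappa * d y x) in *.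
  set (ga := sqrt kappa * d x z) in *.
  assert (Hal : 0 < al) by (apply Rmult_lt_0_compat; lra).
  assert (Hs : 0 < sin al) by (apply sin_gt_0; lra).
  destruct (spherical_vertex al be ga ltac:(lra) ltac:(lra) ltac:(lra) T1 ltac:(lra) ltac:(lra))
    as [Rr [HR Hvert]].
  assert (HQR : dsph kappa (cos al, sin al, 0) Rr = d y x).
  { apply dsph_of_dot; [lra|fold be; lra|]. fold be.
    apply Rmult_eq_reg_l with (sin al); [|lra].
    rewrite (Hvert al), Rminus_diag, sin_0. ring. }
  assert (HRP : dsph kappa Rr (cos 0, sin 0, 0) = d x z).
  { apply dsph_of_dot; [lra|fold ga; lra|]. fold ga. rewrite dot3_comm.
    apply Rmult_eq_reg_l with (sin al); [|lra].
    rewrite (Hvert 0), Rminus_0_r, sin_0. ring. }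
  pose proof (cat_equator_comparison x z y g Rr Hg HR HQR HRP t Ht) as Hle.
  apply dot3_le_cos_of_le_dsph in Hle; [|lra|apply on_sphere_equator|exact HR|lra].
  replace (sqrt kappa * (t * d z y)) with (t * al) in Hle by (unfold al; ring).
  eapply Rle_trans; [|exact Hle]. right.
  unfold sin_interp. replace ((1 - t) * al) with (al - t * al) by ring.
  rewrite <- (Hvert (t * al)). field. lra.
Qed.

Lemma cos_scaled_dist_pos v w : 0 < cos (sqrt kappa * d v w).
Proof.
  apply cos_gt_0; pose proof (scaled_dist_bounds v w); lra.
Qed.

Lemma resolvent_secant_bound (g : X -> Rbar) lam x z y gz gy :
  convex_fun d g -> 0 < lam -> g z = Finite gz -> g y = Finite gy ->
  is_resolvent kappa d g lam x z -> 0 < d z y -> forall t, 0 < t <= 1 ->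
  t * (lam * (gz - gy)) <=
    psi_profile kappa (sin_interp (sqrt kappa * d z y)
      (cos (sqrt kappa * d z x)) (cos (sqrt kappa * d y x)) t) -
    psi_profile kappa (sin_interp (sqrt kappa * d z y)
      (cos (sqrt kappa * d z x)) (cos (sqrt kappa * d y x)) 0).
Proof.
  intros Hconv Hlam Hgz Hgy Hres Hzy t Ht.
  destruct (geodesic_exists z y) as [gam Hgam].
  pose proof (cat_cos_comparison x z y gam Hgam Hzy t ltac:(lra)) as Hcw.
  pose proof (scaled_dist_bounds z y).
  pose proof (cos_scaled_dist_pos z x). pose proof (cos_scaled_dist_pos y x).
  set (w := gam (t * d z y)) in *.
  set (th := sqrt kappa * d z y) in *.
  set (D := cos (sqrt kappa * d z x)) in *. set (E := cos (sqrt kappa * d y x)) in *.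
  set (h := fun s => psi_profile kappa (sin_interp th D E s)).
  assert (Hth : 0 < th) by (apply Rmult_lt_0_compat; [apply sqrt_kappa_pos|]; lra).
  assert (Hs : 0 < sin th) by (apply sin_gt_0; pose proof PI_RGT_0; lra).
  assert (HPw : Psi kappa d x w <= h t).
  { apply psi_profile_antitone; auto.
    apply Rlt_le_trans with (Rmin D E); [apply Rmin_pos; assumption|].
    apply min_le_sin_interp; lra. }
  assert (HPz : Psi kappa d x z = h 0) by (unfold h; rewrite sin_interp0; auto).
  specialize (Hres w). rewrite Hgz in Hres.
  specialize (Hconv z y gam Hgam t ltac:(lra)). fold w in Hconv. rewrite Hgz, Hgy in Hconv.
  destruct (g w) as [gw| |]; simpl in Hres, Hconv; try contradiction.
  rewrite HPz in Hres.
  assert (Psi kappa d x w / lam <= h t / lam)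
    by (apply Rmult_le_compat_r; [left; apply Rinv_0_lt_compat|]; lra).
  assert (Hr : lam * (gz + h 0 / lam) <= lam * (gw + h t / lam))
    by (apply Rmult_le_compat_l; lra).
  replace (lam * (gz + h 0 / lam)) with (lam * gz + h 0) in Hr by (field; lra).
  replace (lam * (gw + h t / lam)) with (lam * gw + h t) in Hr by (field; lra).
  change (t * (lam * (gz - gy)) <= h t - h 0).
  assert (lam * gw <= lam * ((1 - t) * gz + t * gy)) by (apply Rmult_le_compat_l; lra).
  nra.
Qed.

Lemma resolvent_variational_ineq (g : X -> Rbar) lam x z y gz gy :
  convex_fun d g -> 0 < lam -> g z = Finite gz -> g y = Finite gy ->
  is_resolvent kappa d g lam x z -> 0 < d z y ->
  kappa * lam * (gz - gy) <=
  (1 + 1 / cos (sqrt kappa * d z x) ^ 2) * (sqrt kappa * d z y / sin (sqrt kappa * d z y)) *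
  (cos (sqrt kappa * d z x) * cos (sqrt kappa * d z y) - cos (sqrt kappa * d y x)).
Proof.
  intros Hconv Hlam Hgz Hgy Hres Hzy.
  pose proof (scaled_dist_bounds z y).
  assert (Hs : 0 < sin (sqrt kappa * d z y)).
  { apply sin_gt_0; [apply Rmult_lt_0_compat; [apply sqrt_kappa_pos|]|pose proof PI_RGT_0]; lra. }
  pose proof (psi_profile_sin_interp_derive kappa (sqrt kappa * d z y) (cos (sqrt kappa * d z x))
    (cos (sqrt kappa * d y x)) Hk (cos_scaled_dist_pos z x) Hs) as Hder.
  apply is_derive_Reals in Hder.
  pose proof (derive_ge_of_secant_ge _ _ _ Hder
    (resolvent_secant_bound g lam x z y gz gy Hconv Hlam Hgz Hgy Hres Hzy)) as Hl.
  apply Rmult_le_compat_l with (r := kappa) in Hl; [|lra].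
  rewrite <- Rmult_assoc in Hl. eapply Rle_trans; [exact Hl|].
  pose proof (cos_scaled_dist_pos z x). right. field. repeat split; lra.
Qed.

Lemma resolvent_fejer_ineq (g : X -> Rbar) lam x z y gz gy del :
  convex_fun d g -> 0 < lam -> g z = Finite gz -> g y = Finite gy ->
  is_resolvent kappa d g lam x z -> 0 < del -> del <= cos (sqrt kappa * d z x) ->
  kappa * lam * (gz - gy) <=
  (sqrt kappa * d y x) ^ 2 - (sqrt kappa * d y z) ^ 2 + 2 * (sqrt kappa * d z x) ^ 2 / del ^ 2.
Proof.
  intros Hconv Hlam Hgz Hgy Hres Hdel Hcos.
  assert (Herr : 0 <= 2 * (sqrt kappa * d z x) ^ 2 / del ^ 2)
    by (unfold Rdiv; apply Rmult_le_pos; [nra|left; apply Rinv_0_lt_compat; nra]).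
  pose proof (metric_nonneg z y).
  destruct (Req_dec (d z y) 0) as [E|E].
  - apply metric_eq0 in E. subst y.
    rewrite Hgz in Hgy. injection Hgy as ->.
    rewrite metric_self, Rmult_0_r. nra.
  - pose proof (resolvent_variational_ineq g lam x z y gz gy Hconv Hlam Hgz Hgy Hres
      ltac:(lra)) as Hv.
    pose proof (scaled_dist_bounds z x).
    pose proof (scaled_dist_bounds z y).
    pose proof (scaled_dist_bounds y x).
    pose proof sqrt_kappa_pos.
    rewrite (metric_sym y z).
    apply (resolvent_trig_bound _ del); auto; try lra.
    split; [apply Rmult_lt_0_compat|]; lra.
Qed.

Lemma Psi_self u : Psi kappa d u u = 0.
Proof.
  unfold Psi. rewrite metric_self, Rmult_0_r, cos_0. field. lra.
Qed.

Lemma Psi_ge_sqr_dist u v : d u v ^ 2 / 4 <= Psi kappa d u v.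
Proof.
  unfold Psi. rewrite (metric_sym v u).
  pose proof (scaled_dist_bounds u v) as Hph.
  pose proof (sqrt_sqrt kappa ltac:(lra)) as Ha2.
  set (ph := sqrt kappa * d u v) in *.
  assert (Hc : 0 < cos ph <= 1) by (split; [apply cos_gt_0; lra|apply COS_bound]).
  pose proof (half_le_sin ph ltac:(lra)) as Hs.
  assert (Hs2 : sin ph ^ 2 = 1 - cos ph ^ 2)
    by (pose proof (sin2 ph); unfold Rsqr in *; nra).
  replace (1 / (kappa * cos ph) - cos ph / kappa) with (sin ph ^ 2 / (kappa * cos ph))
    by (rewrite Hs2; field; lra).
  assert (Hph2 : ph ^ 2 = kappa * d u v ^ 2)
    by (transitivity (sqrt kappa * sqrt kappa * d u v ^ 2); [unfold ph; ring|rewrite Ha2; ring]).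
  assert (sin ph ^ 2 / kappa <= sin ph ^ 2 / (kappa * cos ph)).
  { unfold Rdiv. apply Rmult_le_compat_l; [nra|]. apply Rinv_le_contravar; nra. }
  assert (d u v ^ 2 / 4 <= sin ph ^ 2 / kappa).
  { apply Rmult_le_reg_r with kappa; auto.
    replace (sin ph ^ 2 / kappa * kappa) with (sin ph ^ 2) by (field; lra).
    assert ((ph / 2) ^ 2 <= sin ph ^ 2) by (apply pow_incr; lra). nra. }
  lra.
Qed.

Lemma resolvent_dist_le (g : X -> Rbar) lam L x z gx gz :
  0 < lam -> 0 <= L -> g x = Finite gx -> g z = Finite gz ->
  is_resolvent kappa d g lam x z -> gx <= gz + L * d x z -> d x z <= 4 * lam * L.
Proof.
  intros Hlam HL Hgx Hgz Hres HLip.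
  specialize (Hres x). rewrite Hgx, Hgz, Psi_self in Hres. simpl in Hres.
  pose proof (Psi_ge_sqr_dist x z).
  pose proof (metric_nonneg x z).
  assert (Psi kappa d x z <= lam * L * d x z).
  { apply Rmult_le_reg_r with (/ lam); [apply Rinv_0_lt_compat; lra|].
    replace (lam * L * d x z * / lam) with (L * d x z) by (field; lra).
    unfold Rdiv in Hres. lra. }
  destruct (Req_dec (d x z) 0) as [->|E]; [nra|].
  apply Rmult_le_reg_r with (d x z); nra.
Qed.

Lemma cos_dist_lower_bound :
  exists del, 0 < del /\ forall v w, del <= cos (sqrt kappa * d v w).
Proof.
  destruct (compact_diam_gap d _ (proj1 Hcat) Hcomp Hdiam) as [eta [Heta Hgap]].
  pose proof sqrt_kappa_pos as Ha. pose proof PI_RGT_0.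
  set (eta' := Rmin eta (PI / (2 * sqrt kappa))).
  assert (Heta' : 0 < sqrt kappa * eta' <= PI / 2).
  { split; [apply Rmult_lt_0_compat; [lra|apply Rmin_pos; [lra|apply Rdiv_lt_0_compat; lra]]|].
    replace (PI / 2) with (sqrt kappa * (PI / (2 * sqrt kappa))) by (field; lra).
    apply Rmult_le_compat_l; [lra|apply Rmin_r]. }
  exists (cos (PI / 2 - sqrt kappa * eta')). split; [apply cos_gt_0; lra|].
  intros v w. pose proof (scaled_dist_bounds v w).
  apply cos_decr_1; try lra.
  replace (PI / 2 - sqrt kappa * eta') with (sqrt kappa * (PI / (2 * sqrt kappa) - eta'))
    by (field; lra).
  apply Rmult_le_compat_l; [lra|].
  pose proof (Hgap v w). pose proof (Rmin_l eta (PI / (2 * sqrt kappa))). unfold eta'. lra.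
Qed.

Section ProximalIterates.

Variable N : nat.
Hypothesis HN : (1 <= N)%nat.
Variable f : nat -> X -> Rbar.
Hypothesis Hf : forall i, (1 <= i <= N)%nat ->
  ext_valued (f i) /\ proper_fun (f i) /\ convex_fun d (f i) /\ lsc d (f i).
Hypothesis Hmin : exists z, is_minimizer (sumF f N) z.
Variable lam : nat -> R.
Hypothesis Hlam_pos : forall j, 0 < lam j.
Hypothesis Hlam_div : is_lim_seq (sum_n lam) p_infty.
Hypothesis Hlam_sq : ex_series (fun j => lam j ^ 2).
Variable x : nat -> X.
Hypothesis Hx : forall j i, (1 <= i <= N)%nat ->
  is_resolvent kappa d (f i) (lam j) (x (j * N + i - 1)%nat) (x (j * N + i)%nat).
Variable L : R.
Hypothesis HL : 0 < L.
Hypothesis HLip : forall j i, (1 <= i <= N)%nat ->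
  Rbar_le (f i (x (j * N)%nat))
          (Rbar_plus (f i (x (j * N + i)%nat)) (Finite (L * d (x (j * N)%nat) (x (j * N + i)%nat)))) /\
  Rbar_le (f i (x (j * N + i - 1)%nat))
          (Rbar_plus (f i (x (j * N + i)%nat))
                     (Finite (L * d (x (j * N + i - 1)%nat) (x (j * N + i)%nat)))).

Definition finite_at (y : X) : Prop :=
  forall i, (1 <= i <= N)%nat -> f i y = Finite (real (f i y)).

Lemma f_finite_of_le_plus i y z r : (1 <= i <= N)%nat ->
  f i z = Finite (real (f i z)) -> Rbar_le (f i y) (Rbar_plus (f i z) (Finite r)) ->
  f i y = Finite (real (f i y)).
Proof.
  intros Hi Hz Hle. apply Rbar_finite_real; [|apply (Hf i Hi)].
  intro E. rewrite E, Hz in Hle. exact Hle.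
Qed.

Lemma f_iterate_finite j i : (1 <= i <= N)%nat ->
  f i (x (j * N + i)%nat) = Finite (real (f i (x (j * N + i)%nat))).
Proof.
  intro Hi. apply Rbar_finite_real; [|apply (Hf i Hi)].
  eapply resolvent_finite; [apply (Hf i Hi)|apply Hx; auto].
Qed.

Lemma cycle_start_finite j : finite_at (x (j * N)%nat).
Proof.
  intros i Hi.
  eapply f_finite_of_le_plus; [exact Hi|apply (f_iterate_finite j i Hi)|apply (HLip j i Hi)].
Qed.

Lemma f_prev_finite j i : (1 <= i <= N)%nat ->
  f i (x (j * N + i - 1)%nat) = Finite (real (f i (x (j * N + i - 1)%nat))).
Proof.
  intro Hi.
  eapply f_finite_of_le_plus; [exact Hi|apply (f_iterate_finite j i Hi)|apply (HLip j i Hi)].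
Qed.

Lemma minimizer_finite_at p : is_minimizer (sumF f N) p -> finite_at p.
Proof.
  intros Hp i Hi. apply Rbar_finite_real; [|apply (Hf i Hi)]. revert i Hi.
  apply sumF_finite_terms; [intros i Hi; apply (Hf i Hi)|].
  specialize (Hp (x (0 * N)%nat)).
  rewrite (sumF_finite f N _ (cycle_start_finite 0)) in Hp.
  intro E. rewrite E in Hp. exact Hp.
Qed.

Lemma resolvent_step_le j i : (1 <= i <= N)%nat ->
  d (x (j * N + i - 1)%nat) (x (j * N + i)%nat) <= 4 * lam j * L.
Proof.
  intro Hi.
  apply (resolvent_dist_le (f i) (lam j) L _ _
    (real (f i (x (j * N + i - 1)%nat))) (real (f i (x (j * N + i)%nat))));
    try (apply f_prev_finite || apply f_iterate_finite || apply Hx); auto; try lra.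
  destruct (HLip j i Hi) as [_ Hle].
  rewrite f_prev_finite, f_iterate_finite in Hle by auto. exact Hle.
Qed.

Lemma cycle_dist_le j i : (i <= N)%nat ->
  d (x (j * N)%nat) (x (j * N + i)%nat) <= 4 * INR i * lam j * L.
Proof.
  induction i as [|i IH]; intros Hi.
  - rewrite Nat.add_0_r, metric_self. simpl. lra.
  - pose proof (metric_triangle (x (j * N)%nat) (x (j * N + i)%nat) (x (j * N + S i)%nat)).
    pose proof (resolvent_step_le j (S i) ltac:(lia)) as Hs.
    replace (j * N + S i - 1)%nat with (j * N + i)%nat in Hs by lia.
    specialize (IH ltac:(lia)). rewrite S_INR. lra.
Qed.

Definition cycle_gap (p : X) (j : nat) : R := (sqrt kappa * d p (x (j * N)%nat)) ^ 2.

Section CosineGap.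

Variable del : R.
Hypothesis Hdel : 0 < del.
Hypothesis Hcos : forall v w, del <= cos (sqrt kappa * d v w).

Lemma step_fejer p j i : finite_at p -> (1 <= i <= N)%nat ->
  kappa * lam j * (real (f i (x (j * N + i)%nat)) - real (f i p)) <=
  (sqrt kappa * d p (x (j * N + i - 1)%nat)) ^ 2 - (sqrt kappa * d p (x (j * N + i)%nat)) ^ 2
    + 32 * kappa * L ^ 2 / del ^ 2 * lam j ^ 2.
Proof.
  intros Hp Hi.
  set (z := x (j * N + i)%nat). set (xp := x (j * N + i - 1)%nat).
  pose proof (resolvent_fejer_ineq (f i) (lam j) xp z p _ _ del
    (proj1 (proj2 (proj2 (Hf i Hi)))) (Hlam_pos j) (f_iterate_finite j i Hi) (Hp i Hi)
    (Hx j i Hi) Hdel (Hcos z xp)) as Hv.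
  assert (Hzx : d z xp <= 4 * lam j * L)
    by (rewrite metric_sym; apply resolvent_step_le; auto).
  pose proof (metric_nonneg z xp).
  pose proof (sqrt_sqrt kappa ltac:(lra)) as Ha2.
  assert (Hsq : (sqrt kappa * d z xp) ^ 2 <= kappa * (16 * L ^ 2 * lam j ^ 2)).
  { replace ((sqrt kappa * d z xp) ^ 2) with (sqrt kappa * sqrt kappa * d z xp ^ 2) by ring.
    rewrite Ha2. apply Rmult_le_compat_l; [lra|nra]. }
  assert (2 * (sqrt kappa * d z xp) ^ 2 / del ^ 2 <= 32 * kappa * L ^ 2 / del ^ 2 * lam j ^ 2).
  { replace (32 * kappa * L ^ 2 / del ^ 2 * lam j ^ 2)
      with (2 * (kappa * (16 * L ^ 2 * lam j ^ 2)) / del ^ 2) by (field; lra).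
    unfold Rdiv. apply Rmult_le_compat_r; [left; apply Rinv_0_lt_compat; nra|lra]. }
  fold z in Hv. lra.
Qed.

Definition fejer_const : R := 32 * kappa * L ^ 2 / del ^ 2 + 4 * kappa * INR N * L ^ 2.

Lemma cycle_fejer_partial p j m : finite_at p -> (m <= N)%nat ->
  kappa * lam j * (sumF_real f m (x (j * N)%nat) - sumF_real f m p) <=
  cycle_gap p j - (sqrt kappa * d p (x (j * N + m)%nat)) ^ 2 + INR m * fejer_const * lam j ^ 2.
Proof.
  intros Hp. unfold cycle_gap. induction m as [|m IH]; intros Hm.
  - simpl. rewrite Nat.add_0_r. lra.
  - cbn [sumF_real]. specialize (IH ltac:(lia)).
    pose proof (step_fejer p j (S m) Hp ltac:(lia)) as Hst.
    replace (j * N + S m - 1)%nat with (j * N + m)%nat in Hst by lia.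
    destruct (HLip j (S m) ltac:(lia)) as [Hl _].
    rewrite f_iterate_finite, (cycle_start_finite j) in Hl by lia. simpl in Hl.
    pose proof (cycle_dist_le j (S m) Hm).
    assert (INR (S m) <= INR N) by (apply le_INR; lia).
    pose proof (Hlam_pos j).
    assert (4 * INR (S m) * lam j * L <= 4 * INR N * lam j * L)
      by (apply Rmult_le_compat_r; [lra|apply Rmult_le_compat_r; lra]).
    assert (kappa * lam j * (real (f (S m) (x (j * N)%nat)) - real (f (S m) (x (j * N + S m)%nat)))
              <= 4 * kappa * INR N * L ^ 2 * lam j ^ 2).
    { replace (4 * kappa * INR N * L ^ 2 * lam j ^ 2)
        with (kappa * lam j * (L * (4 * INR N * lam j * L))) by ring.
      apply Rmult_le_compat_l; nra. }
    rewrite S_INR. unfold fejer_const in *. nra.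
Qed.

End CosineGap.

Lemma cycle_fejer : exists C, 0 <= C /\ forall p j, finite_at p ->
  kappa * lam j * (sumF_real f N (x (j * N)%nat) - sumF_real f N p) <=
  cycle_gap p j - cycle_gap p (S j) + C * lam j ^ 2.
Proof.
  destruct cos_dist_lower_bound as [del [Hdel Hcos]].
  exists (INR N * fejer_const del). split.
  - apply Rmult_le_pos; [apply pos_INR|]. unfold fejer_const.
    pose proof (pos_INR N).
    assert (0 <= 32 * kappa * L ^ 2 / del ^ 2)
      by (unfold Rdiv; apply Rmult_le_pos; [nra|left; apply Rinv_0_lt_compat; nra]).
    assert (0 <= 4 * kappa * INR N * L ^ 2)
      by (apply Rmult_le_pos; [apply Rmult_le_pos|apply pow2_ge_0]; lra).
    lra.
  - intros p j Hp. unfold cycle_gap at 2.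
    replace (S j * N)%nat with (j * N + N)%nat by (simpl; lia).
    apply cycle_fejer_partial; auto.
Qed.

Lemma cycle_values_frequently_min p0 : is_minimizer (sumF f N) p0 ->
  forall eps, 0 < eps -> forall M, exists j, (M <= j)%nat /\
    sumF_real f N (x (j * N)%nat) - sumF_real f N p0 < eps.
Proof.
  intros Hp0.
  destruct cycle_fejer as [C [HC Hfej]].
  apply (quasi_fejer_frequently_small kappa C ((PI / 2) ^ 2) lam (cycle_gap p0)
    (fun j => sumF_real f N (x (j * N)%nat) - sumF_real f N p0)); auto.
  - intro j. unfold cycle_gap.
    pose proof (scaled_dist_bounds p0 (x (j * N)%nat)).
    split; [apply pow2_ge_0|apply pow_incr; lra].
  - intro j. apply Hfej, minimizer_finite_at, Hp0.
Qed.

Lemma cluster_of_minimizing_is_minimizer p0 q (u : nat -> nat) :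
  is_minimizer (sumF f N) p0 ->
  (forall k, sumF_real f N (x (u k * N)%nat) - sumF_real f N p0 < 1 / (INR k + 1)) ->
  (forall e, 0 < e -> forall M, exists k, (M <= k)%nat /\ d (x (u k * N)%nat) q < e) ->
  is_minimizer (sumF f N) q.
Proof.
  intros Hp0 Hval Hnear y.
  eapply Rbar_le_trans; [|apply (Hp0 y)].
  apply NNPP. intro Hn. apply Rbar_not_le_lt in Hn.
  rewrite (sumF_finite f N p0 (minimizer_finite_at p0 Hp0)) in Hn.
  destruct (Rbar_lt_dense _ _ Hn) as [M [HM1 HM2]].
  destruct (sumF_lsc d f N (fun i Hi => conj (proj1 (Hf i Hi)) (proj2 (proj2 (proj2 (Hf i Hi)))))
    q M HM2) as [e [He He']].
  destruct (archimed_cor1 (M - sumF_real f N p0) ltac:(lra)) as [K [HK1 HK2]].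
  destruct (Hnear e He K) as [k [HKk Hk2]].
  specialize (He' (x (u k * N)%nat) ltac:(rewrite metric_sym; exact Hk2)).
  rewrite (sumF_finite f N _ (cycle_start_finite (u k))) in He'. simpl in He'.
  specialize (Hval k).
  assert (1 / (INR k + 1) <= / INR K).
  { assert (INR K <= INR k) by (apply le_INR; auto). assert (0 < INR K) by (apply lt_0_INR; auto).
    unfold Rdiv. rewrite Rmult_1_l. apply Rinv_le_contravar; lra. }
  lra.
Qed.

Lemma minimizer_cluster_point : exists q, is_minimizer (sumF f N) q /\
  forall e, 0 < e -> forall M, exists j, (M <= j)%nat /\ d q (x (j * N)%nat) < e.
Proof.
  destruct Hmin as [p0 Hp0].
  destruct (choice (fun k j => (k <= j)%nat /\
      sumF_real f N (x (j * N)%nat) - sumF_real f N p0 < 1 / (INR k + 1))) as [u Hu].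
  { intro k. apply cycle_values_frequently_min; auto.
    apply Rdiv_lt_0_compat; [lra|pose proof (pos_INR k); lra]. }
  destruct (compact_cluster_point d (proj1 Hcat) Hcomp (fun k => x (u k * N)%nat)) as [q Hq].
  exists q. split.
  - apply (cluster_of_minimizing_is_minimizer p0 q u Hp0); [intro k; apply Hu|exact Hq].
  - intros e He M. destruct (Hq e He M) as [k [HMk Hd]].
    exists (u k). split; [destruct (Hu k); lia|].
    rewrite metric_sym. exact Hd.
Qed.

Lemma cycle_gap_lt_iff q j r : 0 <= r ->
  cycle_gap q j < (sqrt kappa * r) ^ 2 <-> d q (x (j * N)%nat) < r.
Proof.
  intro Hr. unfold cycle_gap.
  pose proof sqrt_kappa_pos. pose proof (metric_nonneg q (x (j * N)%nat)).
  split; intro H1.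
  - apply Rnot_le_lt. intro H2.
    assert ((sqrt kappa * r) ^ 2 <= (sqrt kappa * d q (x (j * N)%nat)) ^ 2)
      by (apply pow_incr; split; nra).
    lra.
  - assert (sqrt kappa * d q (x (j * N)%nat) < sqrt kappa * r) by (apply Rmult_lt_compat_l; lra).
    assert (0 <= sqrt kappa * d q (x (j * N)%nat)) by nra. nra.
Qed.

Lemma cycle_starts_converge q : is_minimizer (sumF f N) q ->
  (forall e, 0 < e -> forall M, exists j, (M <= j)%nat /\ d q (x (j * N)%nat) < e) ->
  forall e, 0 < e -> exists J, forall j, (J <= j)%nat -> d q (x (j * N)%nat) < e.
Proof.
  intros Hq Hnear e He.
  destruct cycle_fejer as [C [HC Hfej]].
  pose proof sqrt_kappa_pos.
  assert (Hrec : forall j, cycle_gap q (S j) <= cycle_gap q j + C * lam j ^ 2).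
  { intro j. specialize (Hfej q j (minimizer_finite_at q Hq)).
    pose proof (Hq (x (j * N)%nat)) as Hle.
    rewrite (sumF_finite f N q (minimizer_finite_at q Hq)),
      (sumF_finite f N _ (cycle_start_finite j)) in Hle. simpl in Hle.
    pose proof (Hlam_pos j).
    assert (0 <= kappa * lam j * (sumF_real f N (x (j * N)%nat) - sumF_real f N q))
      by (apply Rmult_le_pos; [nra|lra]).
    lra. }
  assert (Hfreq : forall eps, 0 < eps -> forall M, exists j, (M <= j)%nat /\ cycle_gap q j < eps).
  { intros eps Heps M.
    set (r := sqrt eps / sqrt kappa).
    assert (Hr : 0 < r) by (apply Rdiv_lt_0_compat; [apply sqrt_lt_R0|]; lra).
    assert (Er : (sqrt kappa * r) ^ 2 = eps)
      by (unfold r; replace (sqrt kappa * (sqrt eps / sqrt kappa)) with (sqrt eps) by (field; lra);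
          simpl; rewrite Rmult_1_r; apply sqrt_sqrt; lra).
    destruct (Hnear r Hr M) as [j [Hj Hd]].
    exists j. split; auto. rewrite <- Er. apply cycle_gap_lt_iff; lra. }
  destruct (quasi_fejer_eventually_small C lam (cycle_gap q) HC Hrec Hlam_sq Hfreq
    ((sqrt kappa * e) ^ 2) ltac:(apply pow_lt; nra)) as [J HJ].
  exists J. intros j Hj. apply (cycle_gap_lt_iff q j e); [lra|]. auto.
Qed.

Lemma iterates_converge q :
  (forall e, 0 < e -> exists J, forall j, (J <= j)%nat -> d q (x (j * N)%nat) < e) ->
  converges_to d x q.
Proof.
  intros Hstart e He.
  assert (HNr : 1 <= INR N) by (apply (le_INR 1); auto).
  destruct (Hstart (e / 2) ltac:(lra)) as [J1 HJ1].
  destruct (sqr_summable_eventually_lt lam Hlam_sq (fun j => Rlt_le _ _ (Hlam_pos j))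
     (e / (8 * INR N * L)) ltac:(apply Rdiv_lt_0_compat; nra)) as [J2 HJ2].
  exists ((J1 + J2) * N)%nat. intros n Hn.
  assert (HNz : N <> 0%nat) by lia.
  set (j := (n / N)%nat). set (i := (n mod N)%nat).
  assert (Hn_eq : n = (j * N + i)%nat)
    by (pose proof (Nat.div_mod_eq n N); unfold j, i; lia).
  assert (Hi : (i < N)%nat) by (apply Nat.mod_upper_bound; auto).
  assert (Hj : (J1 + J2 <= j)%nat)
    by (unfold j; apply Nat.div_le_lower_bound; auto; rewrite Nat.mul_comm; exact Hn).
  rewrite Hn_eq, metric_sym.
  pose proof (metric_triangle q (x (j * N)%nat) (x (j * N + i)%nat)).
  pose proof (cycle_dist_le j i ltac:(lia)).
  specialize (HJ1 j ltac:(lia)). specialize (HJ2 j ltac:(lia)).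
  assert (4 * INR i * lam j * L <= 4 * INR N * lam j * L).
  { pose proof (Hlam_pos j). assert (INR i <= INR N) by (apply le_INR; lia).
    apply Rmult_le_compat_r; [lra|apply Rmult_le_compat_r; lra]. }
  assert (Hsmall : 4 * INR N * L * lam j < 4 * INR N * L * (e / (8 * INR N * L)))
    by (apply Rmult_lt_compat_l; [nra|exact HJ2]).
  replace (4 * INR N * L * (e / (8 * INR N * L))) with (e / 2) in Hsmall by (field; lra).
  lra.
Qed.

Lemma proximal_splitting_converges : exists p, converges_to d x p /\ is_minimizer (sumF f N) p.
Proof.
  destruct minimizer_cluster_point as [q [Hq Hnear]].
  exists q. split; [|exact Hq].
  apply iterates_converge, cycle_starts_converge; auto.
Qed.

End ProximalIterates.

End CATSpace.

Theorem mainTheorem5 (X : Type) (d : X -> X -> R) (kappa : R)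
  (Hk : 0 < kappa)
  (Hcat : CAT_space kappa d)
  (Hcomp : m_compact d)
  (Hdiam : forall v w, d v w < PI / (2 * sqrt kappa))
  (N : nat) (HN : (1 <= N)%nat)
  (f : nat -> X -> Rbar)
  (Hf : forall i, (1 <= i <= N)%nat ->
          ext_valued (f i) /\ proper_fun (f i) /\ convex_fun d (f i) /\ lsc d (f i))
  (Hmin : exists z, is_minimizer (sumF f N) z)
  (lam : nat -> R)
  (Hlam_pos : forall j, 0 < lam j)
  (Hlam_div : is_lim_seq (sum_n lam) p_infty)
  (Hlam_sq : ex_series (fun j => lam j ^ 2))
  (x : nat -> X)
  (Hx : forall j i, (1 <= i <= N)%nat ->
          is_resolvent kappa d (f i) (lam j) (x (j * N + i - 1)%nat) (x (j * N + i)%nat))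
  (L : R) (HL : 0 < L)
  (HLip : forall j i, (1 <= i <= N)%nat ->
     Rbar_le (f i (x (j * N)%nat))
             (Rbar_plus (f i (x (j * N + i)%nat)) (Finite (L * d (x (j * N)%nat) (x (j * N + i)%nat)))) /\
     Rbar_le (f i (x (j * N + i - 1)%nat))
             (Rbar_plus (f i (x (j * N + i)%nat))
                        (Finite (L * d (x (j * N + i - 1)%nat) (x (j * N + i)%nat))))) :
  exists p, converges_to d x p /\ is_minimizer (sumF f N) p.
Proof.
  exact (proximal_splitting_converges X d kappa Hk Hcat Hcomp Hdiam N HN f Hf Hmin
    lam Hlam_pos Hlam_div Hlam_sq x Hx L HL HLip).
Qed.
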